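(* Let $G$ be a countable locally finite group (every finite subset of $G$ is contained in a finite subgroup). Then the ballean $\mathcal{B}(G)$ is decomposable in a direct product of finite sets, i.e. it is asymorphic to $\mathcal{B}(Z)$ for some direct product $Z=\otimes_{\lambda<\delta}(Z_\lambda,e_\lambda)$ of a pointed family of finite sets $Z_\lambda$.
   Context: For an infinite group $G$ with identity $e$, $\mathcal{B}(G)=(G,\mathcal{F},B)$ where $\mathcal{F}=\{A\subseteq G: e\in A, |A|<|G|\}$ and $B(g,A)=gA$. For balleans $(X_1,P_1,B_1)$, $(X_2,P_2,B_2)$ (sets with families of balls $B(x,\alpha)\subseteq X$ indexed by $x\in X,\alpha\in P$), a map $f:X_1\to X_2$ is a $\prec$-mapping if for every $\alpha\in P_1$ there is $\beta\in P_2$ with $f(B_1(x,\alpha))\subseteq B_2(f(x),\beta)$ for all $x$; a bijection $f$ is an asymorphism if $f$ and $f^{-1}$ are $\prec$-mappings. Given an ordinal $\delta$ and non-empty sets $Z_\lambda$ ($\lambda<\delta$) with chosen points $e_\lambda\in Z_\lambda$, the direct product $Z=\otimes_{\lambda<\delta}(Z_\lambda,e_\lambda)$ is the set of functions $f$ on $\{\lambda:\lambda<\delta\}$ with $f(\lambda)\in Z_\lambda$ and $f(\lambda)=e_\lambda$ for all but finitely many $\lambda$; its ballean is $\mathcal{B}(Z)=(Z,\{\lambda:\lambda<\delta\},B)$ with $B(f,\lambda)=\{g\in Z: g(\lambda')=f(\lambda')\text{ for all }\lambda\le\lambda'<\delta\}$. *)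

From Stdlib Require Import List.

Set Implicit Arguments.

Record group := Group {
  carrier :> Type;
  gmul : carrier -> carrier -> carrier;
  gone : carrier;
  ginv : carrier -> carrier;
  gmulA : forall x y z, gmul x (gmul y z) = gmul (gmul x y) z;
  gmul1l : forall x, gmul gone x = x;
  gmulVl : forall x, gmul (ginv x) x = gone
}.

Definition countable (T : Type) : Prop :=
  exists f : T -> nat, forall x y, f x = f y -> x = y.

Definition infinite_type (T : Type) : Prop :=
  ~ exists l : list T, forall x, In x l.

Definition finite_type (T : Type) : Prop :=
  exists l : list T, forall x, In x l.

Definition finite_set (T : Type) (A : T -> Prop) : Prop :=
  exists l : list T, forall x, A x -> In x l.

Definition is_subgroup {G : group} (H : G -> Prop) : Prop :=
  H (gone G) /\ (forall x y, H x -> H y -> H (gmul G x y))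
  /\ (forall x, H x -> H (ginv G x)).

Definition locally_finite (G : group) : Prop :=
  forall l : list G, exists H : G -> Prop,
    is_subgroup (G:=G) H /\ finite_set H /\ (forall x, In x l -> H x).

(* |A| < |T| for A a subset of T: (A injects into T trivially and)
   there is no injection of T into A *)
Definition card_lt (T : Type) (A : T -> Prop) : Prop :=
  ~ exists f : T -> {x : T | A x},
      forall x y, f x = f y -> x = y.

Record ballean := Ballean {
  bpts : Type;
  bradii : Type;
  ball : bpts -> bradii -> bpts -> Prop
}.

Definition prec_mapping (B1 B2 : ballean) (f : bpts B1 -> bpts B2) : Prop :=
  forall alpha : bradii B1, exists beta : bradii B2,
    forall x y, ball B1 x alpha y -> ball B2 (f x) beta (f y).

Definition asymorphism (B1 B2 : ballean) (f : bpts B1 -> bpts B2) : Prop :=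
  exists g : bpts B2 -> bpts B1,
    (forall x, g (f x) = x) /\ (forall y, f (g y) = y) /\
    prec_mapping B1 B2 f /\ prec_mapping B2 B1 g.

Definition asymorphic (B1 B2 : ballean) : Prop :=
  exists f, asymorphism B1 B2 f.

Definition group_radius (G : group) : Type :=
  {A : G -> Prop | A (gone G) /\ card_lt A}.

Definition group_ballean (G : group) : ballean :=
  @Ballean G (group_radius G)
    (fun g A y => exists a, proj1_sig A a /\ y = gmul G g a).

(* An ordinal delta is represented (up to order isomorphism) by its set of
   elements {lambda : lambda < delta}: a type I with a strict well-order. *)
Definition well_order (I : Type) (lt : I -> I -> Prop) : Prop :=
  (forall i, ~ lt i i) /\
  (forall i j k, lt i j -> lt j k -> lt i k) /\
  (forall i j, lt i j \/ i = j \/ lt j i) /\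
  well_founded lt.

Definition finsupp (I : Type) (Z : I -> Type) (e : forall i, Z i)
  (f : forall i, Z i) : Prop :=
  exists l : list I, forall i, f i <> e i -> In i l.

Definition dprod (I : Type) (Z : I -> Type) (e : forall i, Z i) : Type :=
  {f : forall i, Z i | @finsupp I Z e f}.

Definition dprod_ballean (I : Type) (lt : I -> I -> Prop)
  (Z : I -> Type) (e : forall i, Z i) : ballean :=
  @Ballean (@dprod I Z e) I
    (fun f lam g => forall lam', (lt lam lam' \/ lam = lam') ->
       proj1_sig g lam' = proj1_sig f lam').

(* Choose finite subgroups 1 = H_0 <= H_1 <= ... exhausting G and, for each n, a transversal
   Z_n of the left cosets of H_n in H_(n+1) containing 1.  Every g is then uniquely a product
   z_(N-1) ... z_1 z_0 with z_n in Z_n, and g H_n is determined by the digits z_m, m >= n; so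
   two elements lie in a common coset of H_n exactly when their digit sequences agree from n on.
   The subgroups H_n are admissible radii of B(G) because G is infinite, and they are cofinal
   among all radii because a subset meeting the complement of every H_n contains an injective
   sequence, hence has the cardinality of the countable group G. *)
From Stdlib Require Import List Arith Lia Classical ClassicalEpsilon
  FunctionalExtensionality ProofIrrelevance PropExtensionality.

Set Implicit Arguments.
Unset Strict Implicit.

Local Notation "x ** y" := (gmul _ x y) (at level 40, left associativity).
Local Notation inv := (ginv _).

Section GroupFacts.
Variable G : group.

Lemma mulKl (x y : G) : inv x ** (x ** y) = y.
Proof. rewrite gmulA, gmulVl, gmul1l. reflexivity. Qed.

Lemma mulV (x : G) : x ** inv x = gone G.
Proof.
  assert (idem : (x ** inv x) ** (x ** inv x) = x ** inv x).
  { rewrite <- gmulA, mulKl. reflexivity. }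
  rewrite <- (mulKl (x ** inv x) (x ** inv x)), idem, gmulVl. reflexivity.
Qed.

Lemma mul1r (x : G) : x ** gone G = x.
Proof. rewrite <- (gmulVl G x), gmulA, mulV, gmul1l. reflexivity. Qed.

Lemma mulKr (x y : G) : x ** (inv x ** y) = y.
Proof. rewrite gmulA, mulV, gmul1l. reflexivity. Qed.

Lemma inv_uniq (a b : G) : a ** b = gone G -> inv a = b.
Proof. intro hab. rewrite <- (mulKl a b), hab, mul1r. reflexivity. Qed.

Lemma invK (x : G) : inv (inv x) = x.
Proof. apply inv_uniq, gmulVl. Qed.

Lemma invM (x y : G) : inv (x ** y) = inv y ** inv x.
Proof. apply inv_uniq. rewrite <- gmulA, (gmulA G y), mulV, gmul1l, mulV. reflexivity. Qed.

Lemma inv1 : inv (gone G) = gone G.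
Proof. apply inv_uniq, gmul1l. Qed.

Lemma invM_cancel (x a b : G) : inv (x ** a) ** (x ** b) = inv a ** b.
Proof. rewrite invM, <- gmulA, mulKl. reflexivity. Qed.

Variable K : G -> Prop.
Hypothesis subK : is_subgroup K.

Lemma subgroup1 : K (gone G).
Proof. apply subK. Qed.

Lemma subgroupM x y : K x -> K y -> K (x ** y).
Proof. apply subK. Qed.

Lemma subgroupV x : K x -> K (inv x).
Proof. apply subK. Qed.

Lemma coset_sym x y : K (inv x ** y) -> K (inv y ** x).
Proof. intro hxy. apply subgroupV in hxy. rewrite invM, invK in hxy. exact hxy. Qed.

Lemma coset_trans x y z : K (inv x ** y) -> K (inv y ** z) -> K (inv x ** z).
Proof.
  intros hxy hyz. pose proof (subgroupM hxy hyz) as hxz. rewrite <- gmulA, mulKr in hxz.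
  exact hxz.
Qed.

Lemma coset_mem x y : K x -> K (inv x ** y) -> K y.
Proof. intros hx hxy. rewrite <- (mulKr x y). apply subgroupM; assumption. Qed.

Lemma coset_cancel x y a b : K a -> K b -> K (inv (x ** a) ** (y ** b)) -> K (inv x ** y).
Proof.
  intros ha hb hxy.
  replace (inv x ** y) with (a ** ((inv (x ** a) ** (y ** b)) ** inv b))
    by (rewrite invM, <- !gmulA, mulKr, mulV, mul1r; reflexivity).
  apply subgroupM; [assumption|]. apply subgroupM; [assumption|]. apply subgroupV, hb.
Qed.

End GroupFacts.

Lemma asymorphic_sym (B1 B2 : ballean) : asymorphic B1 B2 -> asymorphic B2 B1.
Proof. intros [f [g [gK [fK [hf hg]]]]]. exists g, f. auto. Qed.

Lemma asymorphism_of_bijection (B1 B2 : ballean) (f : bpts B1 -> bpts B2) :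
  (forall x y, f x = f y -> x = y) -> (forall y, exists x, f x = y) ->
  prec_mapping B1 B2 f ->
  (forall beta, exists alpha, forall x y, ball B2 (f x) beta (f y) -> ball B1 x alpha y) ->
  asymorphism B1 B2 f.
Proof.
  intros finj fsurj fprec freflect.
  set (g := fun y => proj1_sig (constructive_indefinite_description _ (fsurj y))).
  assert (fK : forall y, f (g y) = y).
  { intro y. exact (proj2_sig (constructive_indefinite_description _ (fsurj y))). }
  exists g. split; [|split; [exact fK|split; [exact fprec|]]].
  - intro x. apply finj, fK.
  - intro beta. destruct (freflect beta) as [alpha halpha]. exists alpha.
    intros y y' hb. apply halpha. rewrite !fK. exact hb.
Qed.

Lemma nat_lt_well_order : well_order lt.
Proof. split; [|split; [|split]]; [intros; lia | intros; lia | intros; lia | apply lt_wf]. Qed.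

Lemma finsupp_nat_bound (Z : nat -> Type) (e f : forall n, Z n) :
  @finsupp nat Z e f -> exists N, forall m, N <= m -> f m = e m.
Proof.
  intros [l hl]. exists (S (list_max l)). intros m hm.
  destruct (classic (f m = e m)) as [hfe|hfe]; [exact hfe|]. exfalso.
  assert (hmax : list_max l <= list_max l) by lia.
  apply list_max_le, Forall_forall with (x := m) in hmax; [lia|]. apply hl, hfe.
Qed.

Lemma card_lt_of_finite (T : Type) (A : T -> Prop) :
  infinite_type T -> finite_set A -> card_lt A.
Proof.
  intros inf [l hl] [j jinj]. apply inf.
  destruct (classic (inhabited T)) as [inh|empty];
    [|exists nil; intro x; exfalso; exact (empty (inhabits x))].
  set (pre := fun y => epsilon inh (fun x => proj1_sig (j x) = y)).
  exists (map pre l). intro x.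
  assert (preK : pre (proj1_sig (j x)) = x).
  { apply jinj, eq_sig_hprop; [intros; apply proof_irrelevance|].
    apply (epsilon_spec inh (fun x' => proj1_sig (j x') = proj1_sig (j x))). eauto. }
  rewrite <- preK. apply in_map, hl, proj2_sig.
Qed.

Section UnboundedSubset.
Variables (T : Type) (H : nat -> T -> Prop) (A : T -> Prop).
Hypothesis H_mono : forall m n x, m <= n -> H m x -> H n x.
Hypothesis H_exhaustive : forall x, exists n, H n x.

Lemma unbounded_injective_seq :
  (forall n, exists x, A x /\ ~ H n x) ->
  exists s : nat -> T, (forall k, A (s k)) /\ (forall j k, s j = s k -> j = k).
Proof.
  intro unbounded.
  set (b := fun n => proj1_sig (constructive_indefinite_description _ (unbounded n))).
  assert (hb : forall n, A (b n) /\ ~ H n (b n)).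
  { intro n. exact (proj2_sig (constructive_indefinite_description _ (unbounded n))). }
  set (level := fun x => proj1_sig (constructive_indefinite_description _ (H_exhaustive x))).
  assert (hlevel : forall x, H (level x) x).
  { intro x. exact (proj2_sig (constructive_indefinite_description _ (H_exhaustive x))). }
  (* t (k+1) is a level containing b (t k); since b (t k) avoids H (t k), the levels increase
     and b (t j) lies in H (t k) for j < k, whereas b (t k) does not. *)
  set (t := fun k => Nat.iter k (fun n => level (b n)) 0).
  assert (t_step : forall k, t k < t (S k)).
  { intro k. destruct (Nat.lt_ge_cases (t k) (level (b (t k)))) as [lt_t|ge_t]; [exact lt_t|].
    exfalso. apply (proj2 (hb (t k))), (H_mono ge_t), hlevel. }
  assert (t_mono : forall j k, j < k -> t (S j) <= t k).
  { intros j k jk. induction k as [|k IHk]; [lia|].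
    destruct (Nat.eq_dec j k) as [->|ne]; [lia|]. specialize (t_step k). lia. }
  assert (sep : forall j k, j < k -> b (t j) <> b (t k)).
  { intros j k jk same. apply (proj2 (hb (t k))). rewrite <- same.
    apply (H_mono (t_mono j k jk)), hlevel. }
  exists (fun k => b (t k)). split; [intro k; apply hb|].
  intros j k same. destruct (Nat.lt_total j k) as [jk|[jk|kj]]; [| exact jk |];
    exfalso; [apply (sep j k jk) | apply (sep k j kj)]; auto.
Qed.

Lemma card_lt_bounded : countable T -> card_lt A -> exists n, forall x, A x -> H n x.
Proof.
  intros [c cinj] small. apply NNPP. intro unbounded.
  destruct unbounded_injective_seq as [s [sA sinj]].
  { intro n. apply NNPP. intro inside. apply unbounded. exists n. intros x hx.
    apply NNPP. intro outside. apply inside. eauto. }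
  apply small. exists (fun x => exist _ (s (c x)) (sA (c x))).
  intros x y same. apply cinj, sinj. exact (f_equal (@proj1_sig _ _) same).
Qed.

End UnboundedSubset.

Record chain (G : group) (H : nat -> G -> Prop) : Prop := {
  chain_subgroup : forall n, is_subgroup (H n);
  chain_succ : forall n x, H n x -> H (S n) x;
  chain_zero : forall x, H 0 x -> x = gone G;
  chain_finite : forall n, finite_set (H n);
  chain_exhaustive : forall x, exists n, H n x }.

Lemma chain_le (G : group) (H : nat -> G -> Prop) :
  chain H -> forall m n x, m <= n -> H m x -> H n x.
Proof. intros hc m n x mn. induction mn; auto. intro; apply hc; auto. Qed.

Section ExhaustingChain.
Variable G : group.
Variable code : G -> nat.
Hypothesis code_inj : forall x y, code x = code y -> x = y.
Hypothesis lf : locally_finite G.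

Definition decode (k : nat) : option G :=
  match excluded_middle_informative (exists g, code g = k) with
  | left coded => Some (proj1_sig (constructive_indefinite_description _ coded))
  | right _ => None
  end.

Lemma decodeK g : decode (code g) = Some g.
Proof.
  unfold decode. destruct excluded_middle_informative as [coded|uncoded]; [|exfalso; eauto].
  f_equal. apply code_inj. exact (proj2_sig (constructive_indefinite_description _ coded)).
Qed.

Definition option_to_list (o : option G) : list G :=
  match o with Some a => a :: nil | None => nil end.

Definition hull (l : list G) : G -> Prop :=
  proj1_sig (constructive_indefinite_description _ (lf l)).

Lemma hull_spec l : is_subgroup (hull l) /\ finite_set (hull l) /\ forall x, In x l -> hull l x.
Proof. exact (proj2_sig (constructive_indefinite_description _ (lf l))). Qed.

Definition hull_list (l : list G) : list G :=
  proj1_sig (constructive_indefinite_description _ (proj1 (proj2 (hull_spec l)))).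

Lemma in_hull_list l x : hull l x -> In x (hull_list l).
Proof.
  exact (proj2_sig (constructive_indefinite_description _ (proj1 (proj2 (hull_spec l)))) x).
Qed.

Fixpoint chain_list (n : nat) : list G :=
  match n with
  | 0 => gone G :: nil
  | S m => hull_list (chain_list m ++ option_to_list (decode m))
  end.

Definition chain_at (n : nat) : G -> Prop :=
  match n with
  | 0 => fun x => x = gone G
  | S m => hull (chain_list m ++ option_to_list (decode m))
  end.

Lemma in_chain_list n x : chain_at n x -> In x (chain_list n).
Proof. destruct n as [|n]; simpl; [intros ->; auto | apply in_hull_list]. Qed.

Lemma chain_at_chain : chain chain_at.
Proof.
  constructor.
  - intros [|n]; [|apply hull_spec].
    split; [reflexivity|split]; simpl.
    + intros x y -> ->. apply gmul1l.
    + intros x ->. apply inv1.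
  - intros n x hx. apply hull_spec, in_or_app. left. apply in_chain_list, hx.
  - intros x hx. exact hx.
  - intro n. exists (chain_list n). apply in_chain_list.
  - intro x. exists (S (code x)). apply hull_spec, in_or_app. right.
    rewrite decodeK. left. reflexivity.
Qed.

End ExhaustingChain.

Lemma countable_locally_finite_chain (G : group) :
  countable G -> locally_finite G -> exists H : nat -> G -> Prop, chain H.
Proof. intros [code code_inj] lf. exists (chain_at code lf). apply chain_at_chain, code_inj. Qed.

Section Digits.
Variable G : group.
Variable H : nat -> G -> Prop.
Hypothesis hc : chain H.

Let subH n : is_subgroup (H n) := chain_subgroup hc n.

(* The representative of H_n itself is chosen to be 1, so that 1 is a digit. *)
Definition coset_rep (n : nat) (x : G) : G :=
  match excluded_middle_informative (H n x) with
  | left _ => gone G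
  | right _ => epsilon (inhabits (gone G)) (fun y => H n (inv x ** y))
  end.

Lemma coset_rep_mem n x : H n (inv x ** coset_rep n x).
Proof.
  unfold coset_rep. destruct excluded_middle_informative as [hx|hx].
  - rewrite mul1r. apply subgroupV; auto.
  - apply (epsilon_spec (inhabits (gone G)) (fun y => H n (inv x ** y))).
    exists x. rewrite gmulVl. apply subgroup1; auto.
Qed.

Lemma coset_rep_eq n x y : H n (inv x ** y) -> coset_rep n x = coset_rep n y.
Proof.
  intro hxy. unfold coset_rep.
  destruct (excluded_middle_informative (H n x)) as [hx|hx];
    destruct (excluded_middle_informative (H n y)) as [hy|hy]; auto.
  - exfalso. apply hy. apply (coset_mem (subH n) hx hxy).
  - exfalso. apply hx. apply (coset_mem (subH n) hy), coset_sym; auto.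
  - f_equal. apply functional_extensionality. intro z. apply propositional_extensionality.
    split; intro hz.
    + exact (coset_trans (subH n) (coset_sym (subH n) hxy) hz).
    + exact (coset_trans (subH n) hxy hz).
Qed.

Lemma coset_rep_idem n x : coset_rep n (coset_rep n x) = coset_rep n x.
Proof. symmetry. apply coset_rep_eq, coset_rep_mem. Qed.

Lemma coset_rep1 n : coset_rep n (gone G) = gone G.
Proof.
  unfold coset_rep. destruct excluded_middle_informative as [_|h1]; auto.
  exfalso. apply h1, subgroup1; auto.
Qed.

Lemma coset_rep_succ n x : H (S n) x -> H (S n) (coset_rep n x).
Proof.
  intro hx. apply (coset_mem (subH (S n)) hx). apply (chain_succ hc), coset_rep_mem.
Qed.

Definition transversal (n : nat) : Type := {z : G | H (S n) z /\ coset_rep n z = z}.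

Definition transversal1 (n : nat) : transversal n :=
  exist _ (gone G) (conj (subgroup1 (subH (S n))) (coset_rep1 n)).

Definition to_digit (n : nat) (x : G) : transversal n :=
  match excluded_middle_informative (H (S n) x /\ coset_rep n x = x) with
  | left digit => exist _ x digit
  | right _ => transversal1 n
  end.

Lemma to_digit_val n (z : transversal n) : to_digit n (proj1_sig z) = z.
Proof.
  unfold to_digit. destruct excluded_middle_informative as [digit|not_digit].
  - apply eq_sig_hprop; [intros; apply proof_irrelevance | reflexivity].
  - exfalso. exact (not_digit (proj2_sig z)).
Qed.

Lemma transversal_finite n : finite_type (transversal n).
Proof.
  destruct (chain_finite hc (S n)) as [l hl]. exists (map (to_digit n) l).
  intro z. rewrite <- (to_digit_val z). apply in_map, hl, (proj2_sig z).
Qed.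

(* [digit_prod f n k] is the product f (n+k-1) ** ... ** f n. *)
Fixpoint digit_prod (f : forall n, transversal n) (n k : nat) : G :=
  match k with
  | 0 => gone G
  | S k => proj1_sig (f (n + k)) ** digit_prod f n k
  end.

Lemma digit_prod_split f n k : digit_prod f 0 (n + k) = digit_prod f n k ** digit_prod f 0 n.
Proof.
  induction k as [|k IHk]; simpl.
  - rewrite Nat.add_0_r, gmul1l. reflexivity.
  - rewrite Nat.add_succ_r. simpl. rewrite IHk, gmulA. reflexivity.
Qed.

Lemma digit_prod_mem f n k : H (n + k) (digit_prod f n k).
Proof.
  induction k as [|k IHk]; simpl; [apply subgroup1; auto|].
  rewrite Nat.add_succ_r. apply subgroupM; auto.
  - exact (proj1 (proj2_sig (f (n + k)))).
  - apply (chain_succ hc), IHk.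
Qed.

Lemma digit_prod_ext f f' n k :
  (forall m, n <= m < n + k -> f m = f' m) -> digit_prod f n k = digit_prod f' n k.
Proof.
  induction k as [|k IHk]; simpl; intro agree; auto.
  rewrite agree by lia. rewrite IHk; [reflexivity|]. intros; apply agree; lia.
Qed.

Lemma digit_prod1 n k : digit_prod transversal1 n k = gone G.
Proof. induction k as [|k IHk]; simpl; auto. rewrite IHk, gmul1l. reflexivity. Qed.

Lemma digit_prod_stable f N M :
  (forall m, N <= m -> f m = transversal1 m) -> N <= M -> digit_prod f 0 M = digit_prod f 0 N.
Proof.
  intros tail NM. replace M with (N + (M - N)) by lia. rewrite digit_prod_split.
  rewrite (digit_prod_ext (f := f) (f' := transversal1)) by (intros; apply tail; lia).
  rewrite digit_prod1, gmul1l. reflexivity.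
Qed.

(* The top digit is the coset representative of the product, which determines it. *)
Lemma digit_prod_coset_eq f f' n k :
  H n (inv (digit_prod f n k) ** digit_prod f' n k) -> forall m, n <= m < n + k -> f m = f' m.
Proof.
  induction k as [|k IHk]; simpl; intros same m hm; [lia|].
  assert (top : f (n + k) = f' (n + k)).
  { apply eq_sig_hprop; [intros; apply proof_irrelevance|].
    destruct (proj2_sig (f (n + k))) as [_ fix_f], (proj2_sig (f' (n + k))) as [_ fix_f'].
    rewrite <- fix_f, <- fix_f'. apply coset_rep_eq.
    apply (coset_cancel (subH (n + k)) (digit_prod_mem f n k) (digit_prod_mem f' n k)).
    apply (chain_le hc (m := n)); [lia | exact same]. }
  rewrite top, invM_cancel in same.
  destruct (Nat.eq_dec m (n + k)) as [->|ne]; [exact top|].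
  apply IHk; [exact same | lia].
Qed.

Lemma digit_prod_surjective N g : H N g ->
  exists f, (forall m, N <= m -> f m = transversal1 m) /\ digit_prod f 0 N = g.
Proof.
  revert g. induction N as [|N IHN]; intros g hg.
  - exists transversal1. split; auto. symmetry. apply (chain_zero hc), hg.
  - set (z := coset_rep N g).
    assert (hz : H (S N) z /\ coset_rep N z = z)
      by (split; [apply coset_rep_succ, hg | apply coset_rep_idem]).
    destruct (IHN (inv z ** g)) as [f [tail hf]].
    { apply coset_sym; [auto | apply coset_rep_mem]. }
    exists (fun m => if Nat.eq_dec m N then to_digit m z else f m).
    split.
    + intros m hm. destruct (Nat.eq_dec m N); [lia | apply tail; lia].
    + simpl. destruct (Nat.eq_dec N N) as [_|ne]; [|congruence].
      change z with (proj1_sig (exist _ z hz : transversal N)) at 1. rewrite to_digit_val. simpl.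
      rewrite (digit_prod_ext (f' := f))
        by (intros m hm; destruct (Nat.eq_dec m N); [lia | reflexivity]).
      rewrite hf. apply mulKr.
Qed.

Local Notation digits := (@dprod nat transversal transversal1).

Definition support_bound (F : digits) : nat :=
  proj1_sig (constructive_indefinite_description _ (finsupp_nat_bound (proj2_sig F))).

Definition digits_value (F : digits) : G := digit_prod (proj1_sig F) 0 (support_bound F).

Lemma digits_valueE F N :
  (forall m, N <= m -> proj1_sig F m = transversal1 m) ->
  digits_value F = digit_prod (proj1_sig F) 0 N.
Proof.
  intro tail. unfold digits_value.
  pose proof (proj2_sig (constructive_indefinite_description _ (finsupp_nat_bound (proj2_sig F))))
    as tail'.
  set (M := N + support_bound F).
  rewrite <- (digit_prod_stable (N := support_bound F) (M := M) tail') by (unfold M; lia).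
  rewrite (digit_prod_stable (N := N) (M := M) tail) by (unfold M; lia).
  reflexivity.
Qed.

Lemma digits_agree_iff F F' n :
  (forall m, n <= m -> proj1_sig F' m = proj1_sig F m) <->
  H n (inv (digits_value F) ** digits_value F').
Proof.
  destruct (finsupp_nat_bound (proj2_sig F)) as [N tail].
  destruct (finsupp_nat_bound (proj2_sig F')) as [N' tail'].
  set (M := n + (N + N')).
  rewrite (digits_valueE (F := F) (N := M)) by (intros; apply tail; unfold M in *; lia).
  rewrite (digits_valueE (F := F') (N := M)) by (intros; apply tail'; unfold M in *; lia).
  unfold M. rewrite !digit_prod_split. split.
  - intro agree.
    rewrite (digit_prod_ext (f := proj1_sig F') (f' := proj1_sig F)) by (intros; apply agree; lia).
    rewrite invM_cancel. apply subgroupM; [auto | apply subgroupV; auto |];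
      apply (digit_prod_mem _ 0 n).
  - intros same m hm.
    destruct (Nat.lt_ge_cases m (n + (N + N'))) as [lt_m|ge_m].
    + symmetry. apply (digit_prod_coset_eq (n := n) (k := N + N')); [|lia].
      exact (coset_cancel (subH n) (digit_prod_mem _ 0 n) (digit_prod_mem _ 0 n) same).
    + rewrite tail, tail' by lia. reflexivity.
Qed.

Lemma digits_value_injective F F' : digits_value F = digits_value F' -> F = F'.
Proof.
  intro same. apply eq_sig_hprop; [intros; apply proof_irrelevance|].
  apply functional_extensionality_dep. intro m. symmetry.
  apply (proj2 (digits_agree_iff F F' 0)); [|lia].
  rewrite same, gmulVl. apply subgroup1; auto.
Qed.

Lemma digits_value_surjective g : exists F, digits_value F = g.
Proof.
  destruct (chain_exhaustive hc g) as [N hN].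
  destruct (digit_prod_surjective hN) as [f [tail hf]].
  assert (fsupp : @finsupp nat transversal transversal1 f).
  { exists (seq 0 N). intros i hi. apply in_seq.
    destruct (Nat.lt_ge_cases i N); [lia|]. exfalso. apply hi, tail; assumption. }
  exists (exist _ f fsupp). rewrite (digits_valueE (N := N)); assumption.
Qed.

Lemma digits_value_prec : infinite_type G ->
  prec_mapping (dprod_ballean lt transversal transversal1) (group_ballean G) digits_value.
Proof.
  intros inf n.
  exists (exist _ (H n) (conj (subgroup1 (subH n)) (card_lt_of_finite inf (chain_finite hc n)))).
  intros F F' ball_n. exists (inv (digits_value F) ** digits_value F'). split.
  - apply digits_agree_iff. intros m hm. apply ball_n. lia.
  - symmetry. apply mulKr.
Qed.

Lemma digits_value_reflects_balls : countable G ->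
  forall A : bradii (group_ballean G), exists n : nat, forall F F',
    ball (group_ballean G) (digits_value F) A (digits_value F') ->
    ball (dprod_ballean lt transversal transversal1) F n F'.
Proof.
  intros cnt A.
  destruct (card_lt_bounded (chain_le hc) (chain_exhaustive hc) cnt (proj2 (proj2_sig A)))
    as [n hn].
  exists n. intros F F' [a [ha same]] m hm.
  apply (digits_agree_iff F F' n); [|lia]. rewrite same, mulKl. apply hn, ha.
Qed.

End Digits.

Theorem corollary1 (G : group) :
  infinite_type G -> countable G -> locally_finite G ->
  exists (I : Type) (lt : I -> I -> Prop) (Z : I -> Type) (e : forall i, Z i),
    well_order lt /\ (forall i, finite_type (Z i)) /\
    asymorphic (group_ballean G) (@dprod_ballean I lt Z e).
Proof.
  intros inf cnt lf. destruct (countable_locally_finite_chain cnt lf) as [H hc].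
  exists nat, lt, (transversal H), (transversal1 hc).
  split; [exact nat_lt_well_order | split; [apply transversal_finite, hc |]].
  apply asymorphic_sym. exists (digits_value (hc := hc)).
  apply asymorphism_of_bijection.
  - apply digits_value_injective.
  - apply digits_value_surjective.
  - apply digits_value_prec, inf.
  - apply digits_value_reflects_balls, cnt.
Qed.
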